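(* Let $\mu,\nu$ be Borel probability measures on $[0,1)$, with $\nu$ dyadically doubling with constant $D$ ($\nu(\hat I)\le D\nu(I)$ for $I\in\mathcal{D}\setminus\{[0,1)\}$). There exist constants $\epsilon>0$ and $C\ge1$, depending only on $D$, such that for every $I\in\mathcal{D}$ with $\alpha_{\mu,\nu}(I)<\epsilon$, $$\mu(I)\le C\min\{\mu(I_-),\mu(I_+)\}.$$
   Context: $\mathcal{D}$: dyadic intervals $[j2^{-k},(j+1)2^{-k})\subset[0,1)$, $k\ge0$; $\hat I$ is the parent of $I$, and $I_-,I_+$ are the left and right halves of $I$. Wasserstein distance: $\mathbb{W}_1(\nu_1,\nu_2) := \sup_\psi |\int\psi\,d\nu_1 - \int\psi\,d\nu_2|$ over all $1$-Lipschitz $\psi\colon\mathbb{R}\to\mathbb{R}$ supported on $[0,1]$. $T_I$ is the increasing affine map from $\overline I$ onto $[0,1]$, $\mu_I := T_{I\sharp}(\mu|_I)/\mu(I)$, $\nu_I := T_{I\sharp}(\nu|_I)/\nu(I)$ (zero if the mass vanishes), and $\alpha_{\mu,\nu}(I) := \mathbb{W}_1(\mu_I,\nu_I)$. *)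

From HB Require Import structures.
From mathcomp Require Import all_boot all_order all_algebra.
From mathcomp Require Import all_classical all_reals all_analysis.
Set Implicit Arguments. Unset Strict Implicit. Unset Printing Implicit Defensive.
Import Order.TTheory GRing.Theory Num.Theory.
Local Open Scope classical_set_scope.
Local Open Scope ring_scope.

Definition dyad {R : realType} (k j : nat) : set R :=
  [set x : R | j%:R / 2 ^+ k <= x /\ x < j.+1%:R / 2 ^+ k].

Definition Tdyad {R : realType} (k j : nat) (x : R) : R := x * 2 ^+ k - j%:R.

(* mu_I := (T_I)_# (mu|_I) / mu(I), and the zero measure if mu(I) = 0. *)
Definition rescaled {R : realType} (mu : set R -> \bar R) (k j : nat)
  : set R -> \bar R :=
  fun A => if mu (dyad k j) == 0%E then 0%E
           else (((fine (mu (dyad k j)))^-1)%:E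
                * mu (dyad k j `&` (Tdyad k j) @^-1` A))%E.

Definition lip1_supp01 {R : realType} (psi : R -> R) : Prop :=
  (forall x y, `|psi x - psi y| <= `|x - y|) /\
  (forall x, ~ (0 <= x <= 1) -> psi x = 0).

(* Wasserstein-1 distance (Kantorovich-Rubinstein form used in the paper). *)
Definition W1 {R : realType} (nu1 nu2 : set R -> \bar R) : \bar R :=
  ereal_sup [set `| (\int[nu1]_x (psi x)%:E) - (\int[nu2]_x (psi x)%:E) |%E
            | psi in [set psi : R -> R | lip1_supp01 psi]].

Definition alpha {R : realType} (mu nu : set R -> \bar R) (k j : nat) : \bar R :=
  W1 (rescaled mu k j) (rescaled nu k j).

(* Borel probability measure on [0,1), viewed as a measure on R. *)
Definition prob01 {R : realType} (mu : {measure set R -> \bar R}) : Prop :=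
  mu [set: R] = 1%E /\ mu [set` `[0%R, 1%R[] = 1%E.

Definition dyad_doubling {R : realType} (nu : set R -> \bar R) (D : R) : Prop :=
  forall (k j : nat), (j < 2 ^ k.+1)%N ->
    (nu (dyad k j./2) <= D%:E * nu (dyad k.+1 j))%E.

From HB Require Import structures.
From mathcomp Require Import all_boot all_order all_algebra.
From mathcomp Require Import all_classical all_reals all_analysis.
From mathcomp Require Import lra ring zify measurable_realfun.
Set Implicit Arguments.
Unset Strict Implicit.
Unset Printing Implicit Defensive.
Import Order.TTheory GRing.Theory Num.Theory.
Local Open Scope classical_set_scope.
Local Open Scope ring_scope.

(* Test the Wasserstein distance with the tent [half_tent h] of height 1/4
   over the half I_h of I, seen in the rescaled coordinates of I. Its
   integral against mu_I is at most mu(I_h) / (4 mu(I)). Against nu_I it is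
   at least 1/8 of the nu_I-mass of the middle eighth of I_h, and three
   applications of the doubling condition bound that mass below by D^-3.
   Hence alpha(I) < 1/(16 D^3) forces mu(I_h) / mu(I) > 1/(4 D^3). *)

Section dyadic_intervals.
Context {R : realType}.

Lemma dyad_itv (k j : nat) :
  dyad k j = [set` `[(j%:R / 2 ^+ k : R), j.+1%:R / 2 ^+ k[].
Proof. by apply/seteqP; split => x; rewrite /dyad /= in_itv /= => /andP. Qed.

Lemma measurable_dyad (k j : nat) : measurable (dyad k j : set R).
Proof. by rewrite dyad_itv; exact: measurable_itv. Qed.

Lemma measurable_Tdyad (k j : nat) : measurable_fun setT (Tdyad k j : R -> R).
Proof. by apply: measurable_funB => //; exact: measurable_funM. Qed.

(* Needed for pushforwards along [Tdyad k j] to be measures. *)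
HB.instance Definition _ (k j : nat) :=
  isMeasurableFun.Build _ _ R R (Tdyad k j) (measurable_Tdyad k j).

Lemma dyad_preimage_Tdyad (k j n m : nat) : (m < 2 ^ n)%N ->
  dyad k j `&` Tdyad k j @^-1` dyad n m = (dyad (k + n) (j * 2 ^ n + m) : set R).
Proof.
move=> mn; rewrite /dyad /Tdyad -natr1 -(natr1 m) -(natr1 (j * 2 ^ n + m)).
rewrite natrD natrM natrX exprD.
have P0 : (0 : R) < 2 ^+ k by rewrite exprn_gt0.
have Q0 : (0 : R) < 2 ^+ n by rewrite exprn_gt0.
have mQ : (m%:R + 1 : R) <= 2 ^+ n by rewrite natr1 -natrX ler_nat.
have m0 : (0 : R) <= m%:R := ler0n _ _.
move: P0 Q0 mQ; set P := (2 : R) ^+ k; set Q := (2 : R) ^+ n => P0 Q0 mQ.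
apply/seteqP; split => x /=; rewrite !ler_pdivrMr ?ltr_pdivlMr ?mulr_gt0 //.
  by move=> [[? ?] [? ?]]; split; nra.
by move=> [? ?]; do !split; nra.
Qed.

End dyadic_intervals.

Section doubling.
Context {R : realType}.
Implicit Types (mu nu : {measure set R -> \bar R}) (D : R).
Local Open Scope ereal_scope.

Lemma prob01_fineK mu (A : set R) : prob01 mu -> measurable A ->
  (fine (mu A))%:E = mu A.
Proof.
move=> [mu1 _] mA; rewrite fineK // ge0_fin_numE // (@le_lt_trans _ _ 1) ?ltry //.
by rewrite -mu1 le_measure ?inE.
Qed.

Lemma dyad_doubling_le nu D D' : (D <= D')%R ->
  dyad_doubling nu D -> dyad_doubling nu D'.
Proof.
move=> DD' dbl k j hj; apply: le_trans (dbl k j hj) _.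
by rewrite lee_wpmul2r ?lee_fin.
Qed.

Lemma dyad_doubling_gt0 nu D : prob01 nu -> dyad_doubling nu D ->
  forall k j, (j < 2 ^ k)%N -> 0 < nu (dyad k j).
Proof.
move=> [_ nu01] dbl; elim=> [|k IH] j hj.
  have -> : j = 0%N by move: hj; rewrite expn0; case: j.
  by rewrite dyad_itv expr0 !divr1 nu01.
have hj2 : (j./2 < 2 ^ k)%N by rewrite ltn_half_double -mul2n -expnS.
have := lt_le_trans (IH _ hj2) (dbl k j hj).
rewrite lt0e => /andP[ne _]; rewrite lt0e measure_ge0 andbT.
by apply: contraNneq ne => ->; rewrite mule0.
Qed.

Lemma dyad_doubling_iter nu D : (0 <= D)%R -> dyad_doubling nu D ->
  forall k j n m, (j < 2 ^ k)%N -> (m < 2 ^ n)%N ->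
  nu (dyad k j) <= (D ^+ n)%:E * nu (dyad (k + n) (j * 2 ^ n + m)).
Proof.
move=> D0 dbl k j; elim=> [|n IH] m hj hm.
  by move: hm; rewrite expn0 ltnS leqn0 => /eqP->; rewrite expr0 mul1e !addn0 muln1.
have hm2 : (m./2 < 2 ^ n)%N by rewrite ltn_half_double -mul2n -expnS.
have hjm : (j * 2 ^ n.+1 + m < 2 ^ (k + n).+1)%N.
  rewrite !expnS expnD; nia.
have parent : (j * 2 ^ n.+1 + m)./2 = (j * 2 ^ n + m./2)%N.
  by rewrite expnS mulnCA mulnC -!divn2 divnMDl.
apply: le_trans (IH _ hj hm2) _.
rewrite addnS exprSr EFinM -muleA lee_wpmul2l ?lee_fin ?exprn_ge0 //.
by rewrite -parent; exact: dbl.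
Qed.

End doubling.

Section tent.
Context {R : realType}.
Implicit Types c r x y : R.

Definition tent c r x : R := Num.max 0 (r - `|x - c|).

Lemma tent_ge0 c r x : 0 <= tent c r x.
Proof. by rewrite /tent le_max lexx. Qed.

Lemma tent_le c r x : 0 <= r -> tent c r x <= r.
Proof. by move=> r0; rewrite /tent ge_max r0 lerBlDr lerDl normr_ge0. Qed.

Lemma tent_eq0 c r x : r <= `|x - c| -> tent c r x = 0.
Proof. by move=> rx; apply/max_idPl; rewrite subr_le0. Qed.

Lemma tent_lipschitz c r x y : `|tent c r x - tent c r y| <= `|x - y|.
Proof.
have max0_lip (u v : R) : `|Num.max 0 u - Num.max 0 v| <= `|u - v|.
  have [uv|uv] := lerP 0 (u - v); [rewrite (ger0_norm uv)|rewrite (ltr0_norm uv)];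
    rewrite ler_norml !maxEle; case: (leP 0 u); case: (leP 0 v) => ? ?;
    apply/andP; split; lra.
apply: le_trans (max0_lip _ _) _.
have -> : (r - `|x - c|) - (r - `|y - c|) = `|y - c| - `|x - c| by ring.
apply: le_trans (ler_dist_dist _ _) _.
by rewrite opprB addrA subrK distrC.
Qed.

Lemma measurable_tent c r : measurable_fun setT (tent c r).
Proof.
apply: measurable_maxr => //.
apply: measurable_funB => //.
apply: measurableT_comp; first exact: normr_measurable.
exact: measurable_funB.
Qed.

End tent.

Definition half_tent {R : realType} (h : nat) : R -> R := tent (h%:R / 2 + 4^-1) 4^-1.

Section half_tent.
Context {R : realType} (h : nat).

Lemma lip1_supp01_half_tent : (h < 2)%N -> lip1_supp01 (@half_tent R h).
Proof.
move=> h2; split; first exact: tent_lipschitz.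
have h1 : (h%:R : R) <= 1 by rewrite -(mulr1n 1) ler_nat -ltnS.
have h0 : (0 : R) <= h%:R := ler0n _ _.
move=> x x01; apply: tent_eq0.
have [x0|x0] := lerP 0 x; last by rewrite ler_normr; apply/orP; right; lra.
have [x1|x1] := lerP x 1; first by rewrite x0 x1 in x01.
by rewrite ler_normr; apply/orP; left; lra.
Qed.

Lemma half_tent_le_indic (x : R) : half_tent h x <= 4^-1 * \1_(dyad 1 h) x.
Proof.
rewrite indicE; have [hx|hx] := boolP (x \in dyad 1 h).
  by rewrite mulr1 tent_le.
rewrite mulr0 /half_tent tent_eq0 //.
move/negP: hx; rewrite in_setE /dyad /= -(@natr1 R h) expr1.
have [x0|x0] := lerP (h%:R / 2) x.
  have [x1|x1] := lerP ((h%:R + 1) / 2) x; last by move=> /(_ (conj isT isT)).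
  by move=> _; rewrite ler_normr; apply/orP; left; lra.
by move=> _; rewrite ler_normr; apply/orP; right; lra.
Qed.

Lemma half_tent_ge_indic (x : R) : 8^-1 * \1_(dyad 3 (4 * h + 2)) x <= half_tent h x.
Proof.
rewrite indicE; have [hx|_] := boolP (x \in dyad 3 (4 * h + 2)); last first.
  by rewrite mulr0 tent_ge0.
rewrite mulr1 /half_tent /tent le_max; apply/orP; right.
move: hx; rewrite in_setE /dyad /= -(@natr1 R (4 * h + 2)) natrD natrM.
have -> : (2 : R) ^+ 3 = 8 by rewrite !exprS expr0; ring.
by move=> [x0 x1]; rewrite ger0_norm; lra.
Qed.

End half_tent.

Section integral_bounds.
Local Open Scope ereal_scope.

Lemma integral_scaled_indic d (T : measurableType d) (R : realType)
    (M : {measure set T -> \bar R}) (A : set T) (a : R) :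
  (0 <= a)%R -> measurable A -> \int[M]_x (a * \1_A x)%:E = a%:E * M A.
Proof.
move=> a0 mA; under eq_integral do rewrite EFinM.
by rewrite ge0_integralZl ?integral_indic ?setIT //; exact/measurable_EFinP/measurable_indic.
Qed.

Lemma integral_half_tent_bounds (R : realType) (M : {measure set R -> \bar R}) h :
  (8^-1)%:E * M (dyad 3 (4 * h + 2)) <= \int[M]_x (half_tent h x)%:E
    <= (4^-1)%:E * M (dyad 1 h).
Proof.
have mtent : measurable_fun setT (EFin \o @half_tent R h).
  by apply/measurable_EFinP; exact: measurable_tent.
have mind (A : set R) (a : R) : measurable A ->
    measurable_fun setT (fun x => (a * \1_A x)%:E).
  by move=> mA; apply/measurable_EFinP/measurable_funM => //;
    exact: measurable_indic.
apply/andP; split.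
- rewrite -integral_scaled_indic ?invr_ge0 ?ler0n //; last exact: measurable_dyad.
  apply: (ge0_le_integral M measurableT) => //; first exact: mind (measurable_dyad _ _).
  by move=> x _; rewrite lee_fin half_tent_ge_indic.
- rewrite -integral_scaled_indic ?invr_ge0 ?ler0n //; last exact: measurable_dyad.
  apply: (ge0_le_integral M measurableT) => //; last 2 first.
  + exact: mind (measurable_dyad _ _).
  + by move=> x _; rewrite lee_fin half_tent_le_indic.
  + by move=> x _; rewrite lee_fin tent_ge0.
Qed.

End integral_bounds.

Lemma integral_dist_le_W1 (R : realType) (nu1 nu2 : set R -> \bar R) (psi : R -> R) :
  lip1_supp01 psi ->
  (`| \int[nu1]_x (psi x)%:E - \int[nu2]_x (psi x)%:E | <= W1 nu1 nu2)%E.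
Proof. by move=> psi_lip; apply: ereal_sup_ubound; exists psi. Qed.

Section rescaling.
Context (R : realType) (mu : {measure set R -> \bar R}) (k j : nat).
Local Open Scope ereal_scope.

Definition dyad_pushforward : set R -> \bar R :=
  pushforward (mrestr mu (measurable_dyad k j)) (Tdyad k j).

Let dyad_pushforward0 : dyad_pushforward set0 = 0.
Proof. by rewrite /dyad_pushforward /pushforward preimage_set0 measure0. Qed.

Let dyad_pushforward_ge0 A : 0 <= dyad_pushforward A.
Proof. exact: measure_ge0. Qed.

Let dyad_pushforward_sigma_additive : semi_sigma_additive dyad_pushforward.
Proof. exact: measure_semi_sigma_additive. Qed.

HB.instance Definition _ := isMeasure.Build _ _ _ dyad_pushforward
  dyad_pushforward0 dyad_pushforward_ge0 dyad_pushforward_sigma_additive.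

Lemma rescaledE (c : {nonneg R}) : 0 < mu (dyad k j) ->
  mu (dyad k j) = ((c%:num)^-1)%:E -> rescaled mu k j = mscale c dyad_pushforward.
Proof.
move=> mu0 muE; apply/funext => A.
by rewrite /rescaled /mscale /dyad_pushforward /pushforward /mrestr gt_eqF // muE /= invrK setIC.
Qed.

Lemma dyad_pushforward_dyad n m : (m < 2 ^ n)%N ->
  dyad_pushforward (dyad n m) = mu (dyad (k + n) (j * 2 ^ n + m)).
Proof.
by move=> mn; rewrite /dyad_pushforward /pushforward /mrestr setIC dyad_preimage_Tdyad.
Qed.

Lemma integral_half_tent_rescaled (c : {nonneg R}) h : (h < 2)%N ->
  (8^-1 * c%:num)%:E * mu (dyad (k + 3) (j * 2 ^ 3 + (4 * h + 2)))
    <= \int[mscale c dyad_pushforward]_x (half_tent h x)%:E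
    <= (4^-1 * c%:num)%:E * mu (dyad k.+1 (j * 2 + h)).
Proof.
move=> h2; have h3 : (4 * h + 2 < 2 ^ 3)%N by case: h h2 => [|[|]].
have -> : dyad k.+1 (j * 2 + h) = dyad (k + 1) (j * 2 ^ 1 + h) :> set R.
  by rewrite addn1 expn1.
rewrite !EFinM -!muleA -!dyad_pushforward_dyad //.
exact: integral_half_tent_bounds.
Qed.

End rescaling.

Lemma half_mass_arith (R : realFieldType) (P m mh n ns x y : R) :
  0 < P -> 0 < m -> 0 < n ->
  x <= 4^-1 * m^-1 * mh -> 8^-1 * n^-1 * ns <= y ->
  n <= P * ns -> `|x - y| < (16 * P)^-1 -> m <= 4 * P * mh.
Proof.
move=> P0 m0 n0 xu vy nns; rewrite -!mulrA in xu vy.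
set u := m^-1 * mh in xu; set v := n^-1 * ns in vy.
have mhE : mh = m * u by rewrite /u mulrA mulfV ?gt_eqF ?mul1r.
have nsE : ns = n * v by rewrite /v mulrA mulfV ?gt_eqF ?mul1r.
have Pv : 1 <= P * v by rewrite -(ler_pM2l n0) mulr1 mulrCA -nsE.
have P16 : 0 < 16 * P by rewrite mulr_gt0.
rewrite distrC => /(le_lt_trans (ler_norm _)) yx.
rewrite -(ltr_pM2l P16) mulfV ?lt0r_neq0 // in yx.
have Pu : 1 <= 4 * P * u by nra.
by rewrite mhE mulrCA ler_peMr // ltW.
Qed.

Section half_mass.
Context (R : realType) (D : R) (mu nu : {measure set R -> \bar R}).
Hypotheses (mu01 : prob01 mu) (nu01 : prob01 nu).
Hypotheses (D1 : 1 <= D) (nu_dbl : dyad_doubling nu D).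
Local Open Scope ereal_scope.

Lemma dyad_mass_le_half k j h : (j < 2 ^ k)%N -> (h < 2)%N ->
  alpha mu nu k j < ((16 * D ^+ 3)^-1)%:E ->
  mu (dyad k j) <= (4 * D ^+ 3)%:E * mu (dyad k.+1 (j * 2 + h)).
Proof.
move=> jk h2 small_alpha.
have h3 : (4 * h + 2 < 2 ^ 3)%N by case: h h2 small_alpha => [|[|]].
have D0 : (0 < D)%R := lt_le_trans ltr01 D1.
have P0 : (0 < D ^+ 3)%R by rewrite exprn_gt0.
have [->|mu_gt0] := eqVneq (mu (dyad k j)) 0.
  by rewrite mule_ge0 // lee_fin mulr_ge0 // ltW.
have {}mu_gt0 : 0 < mu (dyad k j) by rewrite lt0e mu_gt0 measure_ge0.
have nu_gt0 := dyad_doubling_gt0 nu01 nu_dbl jk.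
have muK n' A := prob01_fineK mu01 (measurable_dyad n' A).
have nuK n' A := prob01_fineK nu01 (measurable_dyad n' A).
set m := fine (mu (dyad k j)); set n := fine (nu (dyad k j)).
have m0 : (0 < m)%R by rewrite -lte_fin muK.
have n0 : (0 < n)%R by rewrite -lte_fin nuK.
have cm_ge0 : (0 <= m^-1)%R by rewrite invr_ge0 ltW.
have cn_ge0 : (0 <= n^-1)%R by rewrite invr_ge0 ltW.
pose X := \int[mscale (NngNum cm_ge0) (dyad_pushforward mu k j)]_x (half_tent h x)%:E.
pose Y := \int[mscale (NngNum cn_ge0) (dyad_pushforward nu k j)]_x (half_tent h x)%:E.
have gap : `|X - Y| < ((16 * D ^+ 3)^-1)%:E.
  apply: le_lt_trans small_alpha; rewrite /alpha.
  rewrite (rescaledE (c := NngNum cm_ge0)) /= ?invrK ?muK //.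
  rewrite (rescaledE (c := NngNum cn_ge0)) /= ?invrK ?nuK //.
  exact/integral_dist_le_W1/lip1_supp01_half_tent.
have [_ ub_mu] := andP (integral_half_tent_rescaled mu k j (NngNum cm_ge0) h2).
have [lb_nu ub_nu] := andP (integral_half_tent_rescaled nu k j (NngNum cn_ge0) h2).
rewrite -(muK k.+1) -(nuK k.+1) -(nuK (k + 3)%N) -!EFinM -/X -/Y in ub_mu ub_nu lb_nu.
have half_tent_ge0 x : 0 <= (half_tent h x)%:E by rewrite lee_fin tent_ge0.
have Xfin : X \is a fin_num.
  by rewrite ge0_fin_numE ?integral_ge0 //; exact: le_lt_trans ub_mu (ltry _).
have Yfin : Y \is a fin_num.
  by rewrite ge0_fin_numE ?integral_ge0 //; exact: le_lt_trans ub_nu (ltry _).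
rewrite -(muK k) -(muK k.+1) -EFinM lee_fin.
pose ns := fine (nu (dyad (k + 3) (j * 2 ^ 3 + (4 * h + 2)))).
apply: (half_mass_arith P0 m0 n0 (ns := ns) (x := fine X) (y := fine Y)).
- by rewrite -lee_fin fineK.
- by rewrite -lee_fin fineK.
- by rewrite -lee_fin EFinM !nuK dyad_doubling_iter // ltW.
- by rewrite -lte_fin -abse_EFin EFinB !fineK.
Qed.

End half_mass.

Theorem mainTheorem8 (R : realType) (D : R) :
  exists (eps C : R), 0 < eps /\ 1 <= C /\
    forall (mu nu : {measure set R -> \bar R}),
      prob01 mu -> prob01 nu -> dyad_doubling nu D ->
      forall (k j : nat), (j < 2 ^ k)%N ->
        (alpha mu nu k j < eps%:E)%E ->
        (mu (dyad k j) <=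
           C%:E * Order.min (mu (dyad k.+1 j.*2)) (mu (dyad k.+1 j.*2.+1)))%E.
Proof.
pose D1 := Num.max D 1.
have D1_ge1 : 1 <= D1 by rewrite le_max lexx orbT.
have P1 : 1 <= D1 ^+ 3 by rewrite exprn_ege1.
exists (16 * D1 ^+ 3)^-1, (4 * D1 ^+ 3); split; first by rewrite invr_gt0; lra.
split; first lra.
move=> mu nu mu01 nu01 nu_dbl k j jk small_alpha.
have nu_dbl1 : dyad_doubling nu D1 by apply: dyad_doubling_le nu_dbl; rewrite le_max lexx.
have half_bound h := dyad_mass_le_half mu01 nu01 D1_ge1 nu_dbl1 (h := h) jk.
rewrite mine_pMr //; last by rewrite lee_fin; lra.
rewrite le_min -!muln2 -[(j * 2).+1]addn1 -[X in dyad k.+1 X]addn0.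
by rewrite !half_bound.
Qed.
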